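(* Let $d\ge1$, $n\ge d+2$, and let $T$ be a $d$-hypertree in $K_n^d$. Then the facet graph $G_d(T)$ is $d$-connected.
   Context: Fix a field $\mathbb F$. A $d$-simplex is a $(d+1)$-element subset of $[n]$ oriented by increasing order; $K_n^d$ is the complex of all subsets of $[n]$ of size at most $d+1$. A $d$-chain is a formal $\mathbb F$-combination of $d$-simplices with boundary $\partial\{s_1<\dots<s_{d+1}\}=\sum_i(-1)^{i-1}(\sigma\setminus\{s_i\})$ extended linearly; a $d$-cycle is a chain with $\partial Z=0$. A set of $d$-simplices is acyclic if it supports no nonzero $d$-cycle; a $d$-hypertree is a maximal acyclic set of $d$-simplices of $K_n^d$. The facet graph $G_d(T)$ has vertex set $T$, two $d$-simplices adjacent iff they share a $(d-1)$-face. A graph is $k$-connected if deleting any set of fewer than $k$ of its vertices leaves a nonempty connected graph. *)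

From HB Require Import structures.
From mathcomp Require Import all_boot all_order all_algebra.

Import GRing.Theory.
Local Open Scope ring_scope.

(* A d-simplex on vertex set [n] = 'I_n is a (d+1)-element subset of 'I_n,
   oriented by the increasing order of 'I_n. *)
Definition is_simplex (n d : nat) (s : {set 'I_n}) : bool := #|s| == d.+1.

(* Sign of the face s :\ v in the boundary of s: (-1)^(i-1) where v = s_i,
   i.e. (-1)^(number of elements of s smaller than v). *)
Definition face_sign (F : fieldType) (n : nat) (s : {set 'I_n}) (v : 'I_n) : F :=
  (-1) ^+ #|[set x in s | (val x < val v)%N]|.

(* Boundary of a d-chain c (a formal F-combination of d-simplices, represented
   by its coefficient function; only coefficients on d-simplices matter),
   evaluated at the (d-1)-simplex t. *)
Definition boundary (F : fieldType) (n d : nat) (c : {ffun {set 'I_n} -> F})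
  (t : {set 'I_n}) : F :=
  \sum_(s : {set 'I_n} | is_simplex n d s)
     \sum_(v in s | s :\ v == t) face_sign F n s v * c s.

Definition acyclic (F : fieldType) (n d : nat) (T : {set {set 'I_n}}) : Prop :=
  forall c : {ffun {set 'I_n} -> F},
    (forall s, s \notin T -> c s = 0) ->
    (forall t, boundary F n d c t = 0) ->
    forall s, c s = 0.

Definition hypertree (F : fieldType) (n d : nat) (T : {set {set 'I_n}}) : Prop :=
  [/\ (forall s, s \in T -> is_simplex n d s),
      acyclic F n d T &
      (forall s, is_simplex n d s -> s \notin T -> ~ acyclic F n d (s |: T))].

Definition facet_adj (n d : nat) (s t : {set 'I_n}) : bool :=
  (s != t) && [exists r : {set 'I_n}, [&& #|r| == d, r \subset s & r \subset t]].

Definition connected_on (T : finType) (e : rel T) (V : {set T}) : Prop :=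
  V != set0 /\
  forall x y, x \in V -> y \in V ->
    connect (fun a b => [&& a \in V, b \in V & e a b]) x y.

Definition k_connected (T : finType) (e : rel T) (V : {set T}) (k : nat) : Prop :=
  forall S : {set T}, S \subset V -> (#|S| < k)%N -> connected_on T e (V :\: S).

(* Only the spanning half of the hypertree property is needed: the boundary
   of every d-simplex is a combination of boundaries of simplices of T, and
   this property passes to the link of a vertex one dimension lower.  For
   d = 1, if T were disconnected, the indicator of the vertices of one
   component would be a 0-cochain whose coboundary vanishes on T but not on
   an edge leaving the component, which contradicts spanning.  For larger d,
   remove a set S of fewer than d facets.  Double counting gives every
   surviving facet a vertex x lying in fewer than d - 1 facets of S, so by
   induction the link of x stays connected after removing them, which joins
   all surviving facets through x.  Two such vertices x, y lie on a common
   surviving facet, because the double link of x, y spans in dimension d - 2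
   and hence has at least d - 1 facets, more than S can cover. *)

From HB Require Import structures.
From mathcomp Require Import all_boot all_order all_algebra.
From Stdlib Require Import Classical_Prop.
From mathcomp Require Import zify.

Set Implicit Arguments.
Unset Strict Implicit.
Unset Printing Implicit Defensive.

Import GRing.Theory.
Local Open Scope ring_scope.

Section DoubleCounting.
Variable X : finType.

Lemma sum_card_containing (s : {set X}) (S : {set {set X}}) :
  (\sum_(x in s) #|[set w in S | x \in w]| = \sum_(w in S) #|s :&: w|)%N.
Proof.
have cardE (Y : finType) (A : {set Y}) (P : pred Y) :
    #|[set x in A | P x]| = (\sum_(x in A) P x)%N.
  rewrite -sum1_card big_mkcond [RHS]big_mkcond; apply: eq_bigr => x _.
  by rewrite inE; case: (x \in A); case: (P x).
rewrite (eq_bigr (fun x => \sum_(w in S) (x \in w))%N); last first.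
  by move=> x _; rewrite (cardE _ S (fun w => x \in w)).
rewrite exchange_big; apply: eq_bigr => w _.
by rewrite -(cardE _ s (fun x => x \in w)); apply: eq_card => x; rewrite !inE andbC.
Qed.

Lemma exists_vertex_in_few k (s : {set X}) (S : {set {set X}}) :
  #|s| = k.+3 -> {in S, forall w : {set X}, #|w| = k.+3} -> s \notin S -> (#|S| < k.+2)%N ->
  exists2 x, x \in s & (#|[set w in S | x \in w]| < k.+1)%N.
Proof.
move=> s_card S_card sS S_small.
apply/exists_inP; apply: contraTT S_small => /exists_inPn heavy.
have lo : (k.+3 * k.+1 <= \sum_(x in s) #|[set w in S | x \in w]|)%N.
  rewrite -s_card -sum_nat_const; apply: leq_sum => x xs.
  by rewrite leqNgt heavy.
have hi : (\sum_(w in S) #|s :&: w| <= #|S| * k.+2)%N.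
  rewrite -sum_nat_const; apply: leq_sum => w wS.
  rewrite -ltnS -s_card; apply: contraNltn sS => sw.
  have sIw : s :&: w = s by apply/eqP; rewrite eqEcard subsetIl sw.
  suff /eqP -> : s == w by [].
  by rewrite eqEcard s_card (S_card w wS) leqnn andbT; apply/setIidPl.
rewrite -leqNgt; move: lo hi; rewrite sum_card_containing; nia.
Qed.

End DoubleCounting.

Section Boundaries.
Variables (F : fieldType) (n : nat).
Implicit Types (s t r u V : {set 'I_n}) (R S T : {set {set 'I_n}}).

Local Notation fs := (face_sign F n).
Local Notation bnd := (boundary F n).
Local Notation chain := {ffun {set 'I_n} -> F}.

Lemma face_sign_sq s v : fs s v * fs s v = 1.
Proof. by rewrite /face_sign -exprD addnn -mul2n exprM sqrrN !expr1n. Qed.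

Lemma face_sign_neq0 s v : fs s v != 0.
Proof. by rewrite /face_sign signr_eq0. Qed.

Lemma face_signU1 s (y v : 'I_n) : y \notin s ->
  fs (y |: s) v = fs s v * (if (val y < val v)%N then -1 else 1).
Proof.
move=> ys; rewrite /face_sign.
have [yv|vy] := boolP (val y < val v)%N.
  have -> : [set x in y |: s | (val x < val v)%N] =
            y |: [set x in s | (val x < val v)%N].
    by apply/setP=> z; rewrite !inE; case: (z =P y) => [->|].
  by rewrite cardsU1 inE (negbTE ys) exprS mulrC.
have -> : [set x in y |: s | (val x < val v)%N] = [set x in s | (val x < val v)%N].
  by apply/setP=> z; rewrite !inE; case: (z =P y) => [->|]; rewrite ?(negbTE vy) ?andbF.
by rewrite mulr1.
Qed.

Lemma face_sign_set1 (q v : 'I_n) : fs [set q] v = if (val q < val v)%N then -1 else 1.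
Proof.
have -> : [set q] = q |: set0 by rewrite setU0.
rewrite face_signU1 ?inE //; suff -> : fs set0 v = 1 by rewrite mul1r.
by rewrite /face_sign (_ : [set x in set0 | _] = set0) ?cards0 //; apply/setP => x; rewrite !inE.
Qed.

Lemma face_sign_swap t (x v : 'I_n) : x != v -> x \notin t -> v \notin t ->
  fs (v |: t) v * fs (x |: (v |: t)) x = - (fs (v |: (x |: t)) v * fs (x |: t) x).
Proof.
move=> xv xt vt.
have xvt : x \notin v |: t by rewrite !inE negb_or xv.
have vxt : v \notin x |: t by rewrite !inE negb_or eq_sym xv.
rewrite (face_signU1 _ xvt) (face_signU1 _ vxt) !face_signU1 // !ltnn.
have : val x != val v by [].
by case: (ltngtP (val v) (val x)) => // _ _; rewrite !mulr1 ?mulrN1 ?mulrN ?mulNr ?opprK.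
Qed.

Lemma face_sign_pair (p q : 'I_n) : p != q -> fs [set p; q] q = - fs [set p; q] p.
Proof.
move=> pq; have pq' : p \notin [set q] by rewrite inE.
rewrite !face_signU1 // !face_sign_set1 !ltnn.
have : val p != val q by [].
by case: (ltngtP (val p) (val q)) => // _ _; rewrite ?mulr1 ?mulrN1 ?opprK.
Qed.

Lemma boundaryE k (c : chain) t : #|t| = k ->
  bnd k c t = \sum_(v | v \notin t) fs (v |: t) v * c (v |: t).
Proof.
move=> tk; rewrite /boundary.
under eq_bigr do rewrite big_mkcond.
rewrite exchange_big /= [RHS]big_mkcond; apply: eq_bigr => v _.
have [vt|vt] /= := boolP (v \in t).
  apply: big1 => s _; case: ifP => // /andP[vs /eqP st].
  by move: vt; rewrite -st setD11.
rewrite (bigD1 (v |: t)) /=; last by rewrite /is_simplex cardsU1 vt tk.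
rewrite setU11 setU1K // eqxx /= big1 ?addr0 // => s /andP[_ ns].
case: ifP => // /andP[vs /eqP st]; move: ns; by rewrite -st setD1K ?eqxx.
Qed.

Lemma boundary_eq0 k (c : chain) t : #|t| != k -> bnd k c t = 0.
Proof.
move=> tk; apply: big1 => s /eqP sk; apply: big1 => v /andP[vs /eqP st].
by move: tk (cardsD1 v s); rewrite -st vs sk add1n => /[swap] -[->]; rewrite eqxx.
Qed.

Definition simplex_chain r : chain := [ffun s => (s == r)%:R].

Lemma boundary_simplex_chain k r (v : 'I_n) : #|r| = k.+1 -> v \in r ->
  bnd k (simplex_chain r) (r :\ v) = fs r v.
Proof.
move=> rk vr; have tk : #|r :\ v| = k by move: rk; rewrite (cardsD1 v r) vr => -[].
rewrite boundaryE // (bigD1 v) ?setD11 //= setD1K // ffunE eqxx mulr1.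
rewrite big1 ?addr0 // => w /andP[wt wv]; rewrite ffunE.
have [E|] := eqVneq (w |: (r :\ v)) r; last by rewrite mulr0.
by move: wt; rewrite !inE negb_and negbK (negbTE wv) /= -E setU11.
Qed.

Definition boundary_spanning k V T : Prop :=
  forall r, r \subset V -> #|r| = k.+1 ->
  exists2 c : chain, (forall s, s \notin T -> c s = 0) &
                     (forall t, bnd k c t = bnd k (simplex_chain r) t).

Definition simplices_on k V T : Prop :=
  forall s, s \in T -> s \subset V /\ #|s| = k.+1.

Lemma hypertree_boundary_spanning d T : hypertree F n d T -> boundary_spanning d setT T.
Proof.
case=> Tsimp Tacyclic Tmax r _ rcard.
have [rT|rT] := boolP (r \in T).
  exists (simplex_chain r) => // s sT; rewrite ffunE.
  by case: eqVneq sT => // ->; rewrite rT.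
apply: NNPP => no_comb.
apply: (Tmax r _ rT); first by rewrite /is_simplex rcard.
move=> c c_supp c_cycle.
have [cr0|crn] := eqVneq (c r) 0.
  apply: Tacyclic => // s sT; have [->//|sr] := eqVneq s r.
  by apply: c_supp; rewrite !inE negb_or sr sT.
exfalso; apply: no_comb.
exists [ffun s => if s == r then 0 else - (c r)^-1 * c s].
  move=> s sT; rewrite ffunE; have [//|sr] := eqVneq s r.
  by rewrite (c_supp s) ?mulr0 // !inE negb_or sr sT.
move=> t; have [/eqP tk|tk] := boolP (#|t| == d); last by rewrite !boundary_eq0.
have := c_cycle t; rewrite !boundaryE // => c_t.
have E s : [ffun s => if s == r then 0 else - (c r)^-1 * c s] s
           = - (c r)^-1 * c s + simplex_chain r s.
  rewrite !ffunE; have [->|_] := eqVneq s r; last by rewrite addr0.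
  by rewrite mulNr mulVf ?addNr.
under eq_bigr do rewrite E mulrDr mulrCA.
by rewrite big_split /= -mulr_sumr c_t mulr0 add0r.
Qed.

Definition link (x : 'I_n) R : {set {set 'I_n}} :=
  [set s :\ x | s in [set s in R | x \in s]].

Lemma mem_link x R u : (u \in link x R) = (x \notin u) && (x |: u \in R).
Proof.
apply/imsetP/andP => [[s]|[xu uR]].
  by rewrite inE => /andP[sR xs] ->; rewrite setD11 setD1K.
by exists (x |: u); rewrite ?setU1K // inE uR setU11.
Qed.

Lemma linkS x R S : R \subset S -> link x R \subset link x S.
Proof. by move=> RS; apply/subsetP => u; rewrite !mem_link => /andP[-> /(subsetP RS)]. Qed.

Lemma linkD x R S : link x (R :\: S) = link x R :\: link x S.
Proof. by apply/setP => u; rewrite !(inE, mem_link); case: (x \in u). Qed.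

Lemma card_link x R : (#|link x R| <= #|[set s in R | x \in s]|)%N.
Proof. exact: leq_imset_card. Qed.

Lemma simplices_on_link k x V T :
  simplices_on k.+1 V T -> simplices_on k (V :\ x) (link x T).
Proof.
move=> T_simp u; rewrite mem_link => /andP[xu /T_simp[uV]].
rewrite cardsU1 xu add1n => -[u_card]; split=> //.
by apply/subsetP => y yu; rewrite !inE (subsetP uV) ?inE ?yu ?orbT // andbT;
   apply: contraNneq xu => <-.
Qed.

Lemma boundaryZ k (a : F) (c : chain) t : bnd k [ffun s => a * c s] t = a * bnd k c t.
Proof.
rewrite /boundary mulr_sumr; apply: eq_bigr => s _.
by rewrite mulr_sumr; apply: eq_bigr => v _; rewrite ffunE mulrCA.
Qed.

Definition link_chain (x : 'I_n) (c : chain) : chain :=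
  [ffun m : {set 'I_n} => if x \in m then 0 else fs (x |: m) x * c (x |: m)].

Lemma link_chain_supp x T (c : chain) : (forall s, s \notin T -> c s = 0) ->
  forall m, m \notin link x T -> link_chain x c m = 0.
Proof.
move=> c_supp m; rewrite mem_link negb_and negbK ffunE.
by case: (x \in m) => //= /c_supp ->; rewrite mulr0.
Qed.

Lemma boundary_link_chain_in k x (c : chain) t : x \in t -> bnd k (link_chain x c) t = 0.
Proof.
move=> xt; have [tk|tk] := eqVneq #|t| k; last exact: boundary_eq0.
by rewrite boundaryE // big1 // => v _; rewrite ffunE inE xt orbT mulr0.
Qed.

Lemma boundary_link_chain k x (c : chain) t : x \notin t ->
  bnd k (link_chain x c) t = - fs (x |: t) x * bnd k.+1 c (x |: t).
Proof.
move=> xt; have [tk|tk] := eqVneq #|t| k; last first.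
  by rewrite !boundary_eq0 ?mulr0 // cardsU1 xt add1n eqSS.
rewrite !boundaryE ?cardsU1 ?xt ?tk // (bigD1 x) //= ffunE setU11 mulr0 add0r.
rewrite mulr_sumr; apply: eq_big => [v|v /andP[vt vx]]; first by rewrite !inE negb_or andbC.
have xv : x != v by rewrite eq_sym.
rewrite ffunE !inE (negbTE xv) (negbTE xt) /= mulrA face_sign_swap // setUCA.
by rewrite !mulNr mulrA [fs _ v * _]mulrC.
Qed.

Lemma simplex_chain_link x r : x \notin r ->
  simplex_chain r = [ffun m => fs (x |: r) x * link_chain x (simplex_chain (x |: r)) m].
Proof.
move=> xr; apply/ffunP => m; rewrite !ffunE.
have [xm|xm] := boolP (x \in m).
  by have [mr|] := eqVneq m r; [move: xr; rewrite -mr xm | rewrite mulr0].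
have -> : (x |: m == x |: r) = (m == r).
  by apply/eqP/eqP => [E|->//]; rewrite -(setU1K xm) -(setU1K xr) E.
by have [->|] := eqVneq m r; rewrite ?mulr1 ?face_sign_sq // !mulr0.
Qed.

Lemma boundary_spanning_link k x V T :
  boundary_spanning k.+1 V T -> x \in V -> boundary_spanning k (V :\ x) (link x T).
Proof.
move=> spanT xV r rV rk.
have xr : x \notin r by apply/negP => /(subsetP rV); rewrite !inE eqxx.
have xrV : x |: r \subset V by rewrite subUset sub1set xV (subset_trans rV) ?subsetDl.
have xr_card : #|x |: r| = k.+2 by rewrite cardsU1 xr rk.
have [c c_supp c_bd] := spanT (x |: r) xrV xr_card.
exists [ffun m => fs (x |: r) x * link_chain x c m].
  by move=> m mT; rewrite ffunE (link_chain_supp c_supp) ?mulr0.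
move=> t; rewrite (simplex_chain_link xr) !boundaryZ; congr (_ * _).
have [xt|xt] := boolP (x \in t); first by rewrite !boundary_link_chain_in.
by rewrite !boundary_link_chain // c_bd.
Qed.

Lemma boundary_spanning_nonempty k V T :
  boundary_spanning k V T -> (k < #|V|)%N -> exists s, s \in T.
Proof.
move=> spanT /card_geqP[vs [vs_uniq vs_size vsV]].
pose r := [set v in vs].
have rk : #|r| = k.+1 by rewrite cardsE -vs_size; apply/card_uniqP.
have rV : r \subset V by apply/subsetP => v; rewrite inE => /vsV.
have [v vr] : exists v, v \in r by apply/card_gt0P; rewrite rk.
have [c c_supp c_bd] := spanT r rV rk.
have [T0|[s sT]] := set_0Vmem T; last by exists s.
have : bnd k c (r :\ v) = 0.
  by apply: big1 => s _; apply: big1 => w _; rewrite c_supp ?mulr0 // T0 inE.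
by rewrite c_bd boundary_simplex_chain // => /eqP; rewrite (negbTE (face_sign_neq0 r v)).
Qed.

Lemma boundary_spanning_card k V T :
  simplices_on k V T -> boundary_spanning k V T -> (k.+2 <= #|V|)%N -> (k < #|T|)%N.
Proof.
elim: k V T => [|k IH] V T T_simp spanT kV.
  by have [s sT] := boundary_spanning_nonempty spanT (ltnW kV); apply/card_gt0P; exists s.
have [s sT] := boundary_spanning_nonempty spanT (ltnW kV).
have [sV s_card] := T_simp _ sT.
have [z] : exists z, z \in V :\: s.
  by apply/card_gt0P; rewrite cardsD (setIidPr sV) s_card; lia.
rewrite inE => /andP[zs zV].
have Vz : (k.+2 <= #|V :\ z|)%N by move: kV; rewrite (cardsD1 z V) zV.
have lt_link :=
  IH _ _ (simplices_on_link (x:=z) T_simp) (boundary_spanning_link spanT zV) Vz.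
have through_z : [set w in T | z \in w] \proper T.
  apply/properP; split; first by apply/subsetP => w; rewrite inE => /andP[].
  by exists s; rewrite // inE (negbTE zs) andbF.
exact: leq_ltn_trans (leq_trans lt_link (card_link z T)) (proper_card through_z).
Qed.

Definition coboundary (phi : {set 'I_n} -> F) s : F :=
  \sum_(v in s) fs s v * phi (s :\ v).

Lemma sum_mul_boundary k (c : chain) (phi : {set 'I_n} -> F) :
  \sum_t phi t * bnd k c t = \sum_(s | is_simplex n k s) c s * coboundary phi s.
Proof.
rewrite /boundary; under eq_bigr do rewrite mulr_sumr.
rewrite exchange_big /=; apply: eq_bigr => s _; rewrite /coboundary !mulr_sumr.
under eq_bigr do rewrite mulr_sumr.
rewrite (exchange_big_dep (fun v => v \in s)) /=; last by move=> t v _ /andP[].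
apply: eq_bigr => v vs; rewrite (big_pred1 (s :\ v)) => [|t]; last by rewrite vs eq_sym.
by rewrite mulrCA [RHS]mulrCA [phi _ * _]mulrC.
Qed.

Lemma boundary_spanning_coboundary k V T (phi : {set 'I_n} -> F) :
  boundary_spanning k V T -> {in T, forall s, coboundary phi s = 0} ->
  forall r, r \subset V -> #|r| = k.+1 -> coboundary phi r = 0.
Proof.
move=> spanT phiT r rV rk; have [c c_supp c_bd] := spanT r rV rk.
have <- : \sum_t phi t * bnd k c t = 0.
  rewrite sum_mul_boundary big1 // => s _.
  have [sT|sT] := boolP (s \in T); first by rewrite phiT ?mulr0.
  by rewrite c_supp ?mul0r.
under eq_bigr do rewrite c_bd.
rewrite sum_mul_boundary (bigD1 r) /= ?ffunE ?eqxx ?mul1r; last by rewrite /is_simplex rk.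
by rewrite big1 ?addr0 // => s /andP[_ sr]; rewrite ffunE (negbTE sr) mul0r.
Qed.

Lemma coboundary_pair (p q : 'I_n) (g : {set 'I_n} -> F) : p != q ->
  coboundary g [set p; q] = fs [set p; q] p * (g [set q] - g [set p]).
Proof.
move=> pq; have pq' : p \notin [set q] by rewrite inE.
rewrite /coboundary big_setU1 //= big_set1 setU1K // face_sign_pair //.
have -> : [set p; q] :\ q = [set p] by rewrite setUC setU1K // inE eq_sym.
by rewrite mulrBr mulNr addrC.
Qed.

Local Notation facet_adj_in k R :=
  (fun a b : {set 'I_n} => [&& a \in R, b \in R & facet_adj n k a b]).

Lemma connect_common_vertex1 R a b (x : 'I_n) :
  a \in R -> b \in R -> x \in a -> x \in b -> connect (facet_adj_in 1 R) a b.
Proof.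
move=> aR bR xa xb; have [->|ab] := eqVneq a b; first exact: connect0.
apply: connect1; rewrite aR bR /facet_adj ab; apply/existsP; exists [set x].
by rewrite cards1 !sub1set xa xb.
Qed.

Lemma boundary_spanning_connected1 V T :
  simplices_on 1 V T -> boundary_spanning 1 V T -> (1 < #|V|)%N ->
  connected_on _ (facet_adj n 1) T.
Proof.
move=> T_simp spanT V2; split.
  by have [s sT] := boundary_spanning_nonempty spanT V2; apply/set0Pn; exists s.
move=> s1 s2 s1T s2T; apply: contraT => nc.
pose C := [set a | [exists w in T, (a \in w) && connect (facet_adj_in 1 T) s1 w]].
have C_closed w a b : w \in T -> a \in w -> b \in w -> a \in C -> b \in C.
  move=> wT aw bw; rewrite !inE => /exists_inP[w' w'T /andP[aw' s1w']].
  apply/exists_inP; exists w; rewrite // bw (connect_trans s1w') //.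
  exact: connect_common_vertex1 aw' aw.
have [u us1] : exists u : 'I_n, u \in s1.
  by apply/card_gt0P; have [_ ->] := T_simp _ s1T.
have [v vs2] : exists v : 'I_n, v \in s2.
  by apply/card_gt0P; have [_ ->] := T_simp _ s2T.
have uC : u \in C by rewrite inE; apply/exists_inP; exists s1; rewrite // us1 connect0.
have vC : v \notin C.
  rewrite inE; apply: contra nc => /exists_inP[w wT /andP[vw s1w]].
  exact: connect_trans s1w (connect_common_vertex1 wT s2T vw vs2).
have uv : u != v by apply: contraNneq vC => <-.
pose phi t := ((t \subset C)%:R : F).
have phi_cocycle : {in T, forall s, coboundary phi s = 0}.
  move=> s sT; have [_ /eqP/cards2P[p [q [pq sE]]]] := T_simp s sT.
  have pqC : (p \in C) = (q \in C).
    by apply/idP/idP; apply: C_closed sT _ _; rewrite sE !inE eqxx ?orbT.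
  by rewrite sE coboundary_pair // /phi !sub1set pqC subrr mulr0.
have rV : [set u; v] \subset V.
  have [s1V _] := T_simp _ s1T; have [s2V _] := T_simp _ s2T.
  by rewrite subUset !sub1set (subsetP s1V) // (subsetP s2V).
have uv_card : #|[set u; v]| = 2 by rewrite cards2 uv.
have := boundary_spanning_coboundary spanT phi_cocycle rV uv_card.
rewrite coboundary_pair // /phi !sub1set uC (negbTE vC) sub0r mulrN1 => /eqP.
by rewrite oppr_eq0 (negbTE (face_sign_neq0 _ _)).
Qed.

Lemma facet_adjU1 k (x : 'I_n) (u v : {set 'I_n}) : x \notin u -> x \notin v ->
  facet_adj n k u v -> facet_adj n k.+1 (x |: u) (x |: v).
Proof.
move=> xu xv /andP[uv /existsP[r /and3P[rk ru rv]]]; apply/andP; split.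
  by apply: contraNneq uv => E; rewrite -(setU1K xu) -(setU1K xv) E.
have xr : x \notin r by apply: contraNN xu; apply: (subsetP ru).
by apply/existsP; exists (x |: r); rewrite cardsU1 xr (eqP rk) eqxx !setUS.
Qed.

Lemma connect_link k x R a b :
  connected_on _ (facet_adj n k) (link x R) ->
  a \in R -> b \in R -> x \in a -> x \in b -> connect (facet_adj_in k.+1 R) a b.
Proof.
move=> [_ link_conn] aR bR xa xb.
have aL : a :\ x \in link x R by rewrite mem_link setD11 setD1K.
have bL : b :\ x \in link x R by rewrite mem_link setD11 setD1K.
have /connectP[p p_path p_last] := link_conn _ _ aL bL.
rewrite -(setD1K xa) -(setD1K xb) p_last.
apply/connectP; exists (map (fun u => x |: u) p); last by rewrite last_map.
apply: homo_path p_path => u v /and3P[].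
by rewrite !mem_link => /andP[xu ->] /andP[xv ->]; apply: facet_adjU1.
Qed.

Lemma exists_common_facet k V T S (x y : 'I_n) :
  simplices_on k.+2 V T -> boundary_spanning k.+2 V T -> (k.+4 <= #|V|)%N ->
  x \in V -> y \in V -> x != y -> (#|link x S| <= k)%N ->
  exists2 w, w \in T :\: S & (x \in w) && (y \in w).
Proof.
move=> T_simp spanT V4 xV yV xy Sx.
have yVx : y \in V :\ x by rewrite !inE eq_sym xy.
have V2 : (k.+2 <= #|V :\ x :\ y|)%N.
  by move: V4; rewrite (cardsD1 x V) (cardsD1 y (V :\ x)) xV yVx.
have many := boundary_spanning_card
  (simplices_on_link (x:=y) (simplices_on_link (x:=x) T_simp))
  (boundary_spanning_link (boundary_spanning_link spanT xV) yVx) V2.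
have few : (#|link y (link x S)| <= k)%N.
  by apply: leq_trans (card_link _ _) _; apply: leq_trans (subset_leq_card _) Sx;
     apply/subsetP => u; rewrite inE => /andP[].
have [u] : exists u, u \in link y (link x (T :\: S)).
  apply/card_gt0P; rewrite !linkD cardsD subn_gt0.
  exact: leq_ltn_trans (subset_leq_card (subsetIr _ _)) (leq_ltn_trans few many).
rewrite !mem_link => /andP[yu /andP[xyu xyuR]].
by exists (x |: (y |: u)); rewrite // setU11 setU1r ?setU11.
Qed.

Lemma boundary_spanning_k_connected k V T :
  simplices_on k.+1 V T -> boundary_spanning k.+1 V T -> (k.+3 <= #|V|)%N ->
  k_connected _ (facet_adj n k.+1) T k.+1.
Proof.
elim: k V T => [|k IH] V T T_simp spanT V3 S ST Sk.
  have -> : S = set0 by apply: cards0_eq; lia.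
  by rewrite setD0; apply: boundary_spanning_connected1 T_simp spanT _; lia.
have connect_through (x : 'I_n) a b : x \in V -> (#|link x S| <= k)%N ->
    a \in T :\: S -> b \in T :\: S -> x \in a -> x \in b ->
    connect (facet_adj_in k.+2 (T :\: S)) a b.
  move=> xV Sx aR bR xa xb; apply: connect_link aR bR xa xb; rewrite linkD.
  apply: IH (simplices_on_link (x:=x) T_simp) (boundary_spanning_link spanT xV) _ _
             (linkS x ST) Sx.
  by move: V3; rewrite (cardsD1 x V) xV.
have light a : a \in T :\: S -> exists2 x, x \in a & (#|link x S| <= k)%N.
  move=> /setDP[aT aS]; have [_ a_card] := T_simp _ aT.
  have S_card w : w \in S -> #|w| = k.+3 by move/(subsetP ST)/T_simp => [].
  have [x xa Sx] := exists_vertex_in_few a_card S_card aS Sk.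
  by exists x => //; apply: leq_trans (card_link x S) _.
split.
  apply/set0Pn/card_gt0P; rewrite cardsD (setIidPr ST) subn_gt0.
  exact: ltn_trans Sk (boundary_spanning_card T_simp spanT V3).
move=> a b aR bR.
have [x xa Sx] := light a aR; have [y yb Sy] := light b bR.
have xV : x \in V by have [/subsetP aV _] := T_simp a (setDP aR).1; apply: aV.
have yV : y \in V by have [/subsetP bV _] := T_simp b (setDP bR).1; apply: bV.
have [xy|xy] := eqVneq x y.
  by rewrite -xy in yb; exact: connect_through xV Sx aR bR xa yb.
have [w wR /andP[xw yw]] := exists_common_facet T_simp spanT V3 xV yV xy Sx.
exact: connect_trans (connect_through x a w xV Sx aR wR xa xw)
                     (connect_through y w b yV Sy wR bR yw yb).
Qed.

End Boundaries.

Theorem theorem4p4 (F : fieldType) (d n : nat) (T : {set {set 'I_n}}) :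
  (1 <= d)%N -> (d + 2 <= n)%N -> hypertree F n d T ->
  k_connected _ (facet_adj n d) T d.
Proof.
case: d => // k _ kn hT.
apply: boundary_spanning_k_connected (hypertree_boundary_spanning hT) _.
  by case: hT => T_simp _ _ s sT; rewrite subsetT (eqP (T_simp s sT)).
by rewrite cardsT card_ord -addn2.
Qed.
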